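(* Let $c\in\mathbb{C}$ with $\operatorname{Re}(c)<-1$. Then $\overline{\sigma_c(\mathbb{N})}=\sigma_c(\mathbb{S})$, where the closure is taken in $\mathbb{C}$.
   Context: For $c\in\mathbb{C}$, $\sigma_c(n)=\sum_{d\mid n}d^c$ for $n\in\mathbb{N}$. A Steinitz (supernatural) number is a formal product $n=\prod_{p}p^{\alpha_p}$ over all primes with $\alpha_p\in\mathbb{Z}_{\ge0}\cup\{\infty\}$; $\mathbb{S}$ is the set of all Steinitz numbers. For $\operatorname{Re}(c)<-1$, $\sigma_c$ is extended to $\mathbb{S}$ multiplicatively: $\sigma_c(n)=\prod_p\sigma_c(p^{\alpha_p})$, with $\sigma_c(p^\alpha)=\sum_{i=0}^\alpha p^{ci}$ for finite $\alpha$ and $\sigma_c(p^\infty)=\lim_{k\to\infty}\sigma_c(p^k)=\frac{1}{1-p^c}$. *)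

From Stdlib Require Import Reals List Arith ZArith Znumtheory.
From Coquelicot Require Import Coquelicot.
Import ListNotations.
Open Scope R_scope.

Definition cpow (x : R) (c : C) : C :=
  let t := Im c * ln x in
  Cmult (RtoC (exp (Re c * ln x))) (cos t, sin t).

Definition Csum (l : list C) : C := fold_right Cplus (RtoC 0) l.
Definition Cprod (l : list C) : C := fold_right Cmult (RtoC 1) l.

Definition sigma_nat (c : C) (n : nat) : C :=
  Csum (map (fun d => cpow (INR d) c)
            (filter (fun d => Nat.eqb (n mod d) 0) (seq 1 n))).

(* Steinitz numbers: exponent function on primes, None = infinity.
   (Values at non-primes are irrelevant.) *)
Definition steinitz := nat -> option nat.

Definition sigma_pp (c : C) (p : nat) (a : option nat) : C :=
  match a with
  | Some k => Csum (map (fun i => cpow (INR p) (Cmult (RtoC (INR i)) c)) (seq 0 (S k)))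
  | None => Cinv (Cminus (RtoC 1) (cpow (INR p) c))
  end.

Definition isprime_nat (p : nat) : bool :=
  if prime_dec (Z.of_nat p) then true else false.

Definition sigma_partial (c : C) (alpha : steinitz) (N : nat) : C :=
  Cprod (map (fun p => sigma_pp c p (alpha p)) (filter isprime_nat (seq 0 (S N)))).

Definition sigma_steinitz_is (c : C) (alpha : steinitz) (z : C) : Prop :=
  filterlim (sigma_partial c alpha) eventually (locally z).

Definition sigma_S_set (c : C) (z : C) : Prop :=
  exists alpha : steinitz, sigma_steinitz_is c alpha z.

Definition sigma_N_set (c : C) (z : C) : Prop :=
  exists n : nat, (1 <= n)%nat /\ z = sigma_nat c n.

Definition in_closure (A : C -> Prop) (z : C) : Prop :=
  forall eps : R, 0 < eps -> exists w, A w /\ Cmod (Cminus w z) < eps.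

From Stdlib Require Import Reals List Arith ZArith Znumtheory Lia Lra Permutation.
From Stdlib Require Import Classical ClassicalEpsilon.
From Coquelicot Require Import Coquelicot.
Import ListNotations.
Open Scope R_scope.

(* Steinitz numbers are the points of the product, over the primes, of the one-point
   compactification of nat, and the positive integers (finite exponents, almost all zero)
   are dense in it.  For Re c < -1 every local factor satisfies
   |sigma_c(p^a) - 1| <= 4 p^(Re c) and |sigma_c(p^k) - sigma_c(p^oo)| <= 2^-k, so the partial
   Euler products converge uniformly and sigma_c is uniformly continuous for this topology.
   Replacing infinite exponents by a large K therefore shows sigma_c(S) within the closure
   of sigma_c(N).  Conversely, for z in the closure the exponents of a Steinitz number a are
   fixed one prime at a time -- a finite exponent if some value admits approximations of z at
   every precision, infinity otherwise -- so that z remains a limit of values sigma_c(n) with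
   n close to a; uniform continuity then gives sigma_c(a) = z. *)

Lemma Csum_app l1 l2 : Csum (l1 ++ l2) = (Csum l1 + Csum l2)%C.
Proof. induction l1 as [|x l IH]; simpl. ring. rewrite IH. ring. Qed.

Lemma Cprod_app l1 l2 : Cprod (l1 ++ l2) = (Cprod l1 * Cprod l2)%C.
Proof. induction l1 as [|x l IH]; simpl. ring. rewrite IH. ring. Qed.

Lemma Csum_perm l l' : Permutation l l' -> Csum l = Csum l'.
Proof. induction 1; simpl; try congruence. ring. Qed.

Lemma Csum_flat_map {A B} (f : B -> C) (g : A -> list B) l :
  Csum (map f (flat_map g l)) = Csum (map (fun x => Csum (map f (g x))) l).
Proof. induction l as [|x l IH]; simpl; auto. now rewrite map_app, Csum_app, IH. Qed.

Lemma Csum_mult_l {A} (a : C) (g : A -> C) l :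
  Csum (map (fun x => a * g x)%C l) = (a * Csum (map g l))%C.
Proof. induction l as [|x l IH]; simpl. ring. rewrite IH. ring. Qed.

Lemma Csum_mult_r {A} (a : C) (g : A -> C) l :
  Csum (map (fun x => g x * a)%C l) = (Csum (map g l) * a)%C.
Proof. induction l as [|x l IH]; simpl. ring. rewrite IH. ring. Qed.

Lemma Csum_geometric w n :
  ((1 - w) * Csum (map (fun i => w ^ i) (seq 0 n)))%C = (1 - w ^ n)%C.
Proof.
  induction n as [|n IH]; [simpl; ring|].
  rewrite seq_S, map_app, Csum_app, Cmult_plus_distr_l, IH. simpl. ring.
Qed.

Definition Rsum (l : list R) : R := fold_right Rplus 0 l.

Lemma Rsum_map_filter_le {A} (f : A -> R) (P : A -> bool) l : (forall x, 0 <= f x) ->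
  Rsum (map f (filter P l)) <= Rsum (map f l).
Proof.
  intros H. induction l as [|x l IH]; simpl; [lra|].
  specialize (H x). destruct (P x); simpl; lra.
Qed.

Lemma Rsum_map_mult_l {A} (a : R) (f : A -> R) l :
  Rsum (map (fun x => a * f x) l) = a * Rsum (map f l).
Proof. induction l as [|x l IH]; unfold Rsum in *; simpl; [ring|]. rewrite IH. ring. Qed.

Lemma Cmod_Cprod_map_le {A} (l : list A) (f : A -> C) M :
  (forall x, In x l -> Cmod (f x) <= M) -> Cmod (Cprod (map f l)) <= M ^ length l.
Proof.
  induction l as [|x l IH]; intros H; simpl; [rewrite Cmod_1; lra|].
  rewrite Cmod_mult. apply Rmult_le_compat; try apply Cmod_ge_0.
  - apply H. now left.
  - apply IH. intros y Hy. apply H. now right.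
Qed.

Lemma Cprod_map_sub_le {A} (l : list A) (f g : A -> C) M eta : 1 <= M -> 0 <= eta ->
  (forall x, In x l -> Cmod (f x) <= M /\ Cmod (g x) <= M /\ Cmod (f x - g x) <= eta) ->
  Cmod (Cprod (map f l) - Cprod (map g l)) <= INR (length l) * M ^ length l * eta.
Proof.
  intros HM Heta. induction l as [|x l IH]; intros H.
  - simpl. replace (1 - 1)%C with (RtoC 0) by ring. rewrite Cmod_0. lra.
  - destruct (H x (or_introl eq_refl)) as [Hf [Hg Hfg]].
    assert (IH' := IH (fun y Hy => H y (or_intror Hy))).
    assert (HF := Cmod_Cprod_map_le l f M (fun y Hy => proj1 (H y (or_intror Hy)))).
    cbn [map Cprod fold_right length]. fold (Cprod (map f l)) (Cprod (map g l)).
    set (F := Cprod (map f l)) in *. set (G := Cprod (map g l)) in *.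
    replace (f x * F - g x * G)%C with ((f x - g x) * F + g x * (F - G))%C by ring.
    eapply Rle_trans; [apply Cmod_triangle|]. rewrite !Cmod_mult, S_INR.
    assert (1 <= M ^ length l) by (rewrite <- (pow1 (length l)); apply pow_incr; lra).
    assert (0 <= INR (length l)) by apply pos_INR.
    assert (Cmod (f x - g x) * Cmod F <= eta * M ^ length l)
      by (apply Rmult_le_compat; auto; apply Cmod_ge_0).
    assert (Cmod (g x) * Cmod (F - G) <= M * (INR (length l) * M ^ length l * eta))
      by (apply Rmult_le_compat; auto; apply Cmod_ge_0).
    assert (0 <= (M - 1) * (M ^ length l * eta))
      by (apply Rmult_le_pos; [lra | apply Rmult_le_pos; lra]).
    simpl pow. lra.
Qed.

Lemma Cprod_map_sub_1_le {A} (l : list A) (f : A -> C) (d : A -> R) :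
  (forall x, In x l -> Cmod (f x - 1) <= d x) ->
  Cmod (Cprod (map f l) - 1) <= exp (Rsum (map d l)) - 1.
Proof.
  induction l as [|x l IH]; intros H.
  - simpl. rewrite exp_0. replace (1 - 1)%C with (RtoC 0) by ring. rewrite Cmod_0. lra.
  - assert (IH' := IH (fun y Hy => H y (or_intror Hy))).
    assert (Hx := H x (or_introl eq_refl)).
    cbn [map Cprod Rsum fold_right]. fold (Cprod (map f l)) (Rsum (map d l)) in *.
    set (F := Cprod (map f l)) in *. set (D := Rsum (map d l)) in *.
    replace (f x * F - 1)%C with ((f x - 1) * F + (F - 1))%C by ring.
    eapply Rle_trans; [apply Cmod_triangle|]. rewrite Cmod_mult, exp_plus.
    assert (HF : Cmod F <= exp D).
    { replace F with (F - 1 + 1)%C by ring.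
      eapply Rle_trans; [apply Cmod_triangle|]. rewrite Cmod_1. lra. }
    assert (0 <= Cmod (f x - 1)) by apply Cmod_ge_0.
    assert (1 + d x <= exp (d x)) by apply exp_ineq1_le.
    assert (0 < exp D) by apply exp_pos.
    assert (Cmod (f x - 1) * Cmod F <= d x * exp D)
      by (apply Rmult_le_compat; auto; apply Cmod_ge_0).
    nra.
Qed.

Lemma NoDup_flat_map {A B} (g : A -> list B) l :
  NoDup l -> (forall x, In x l -> NoDup (g x)) ->
  (forall x y b, In x l -> In y l -> In b (g x) -> In b (g y) -> x = y) ->
  NoDup (flat_map g l).
Proof.
  induction l as [|x l IH]; simpl; intros Hl Hg Hdisj; [constructor|].
  inversion Hl; subst. apply NoDup_app; auto.
  - apply IH; auto. intros y y' b Hy Hy'. apply Hdisj; auto.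
  - intros b Hx Hb. rewrite in_flat_map in Hb. destruct Hb as [y [Hy Hby]].
    replace y with x in Hy by (apply (Hdisj x y b); auto). tauto.
Qed.

Lemma exp_le x y : x <= y -> exp x <= exp y.
Proof. intros [H|H]; [left; now apply exp_increasing | subst; apply Rle_refl]. Qed.

Lemma Rpower_le_half x r : 2 <= x -> r <= -1 -> Rpower x r <= / 2.
Proof.
  intros Hx Hr. unfold Rpower.
  assert (Hln : ln 2 <= ln x) by (apply ln_le; lra).
  assert (/ 2 < ln 2) by apply ln_lt_2.
  rewrite <- (exp_ln (/ 2)), ln_Rinv by lra.
  apply exp_le. nra.
Qed.

Lemma pow_half_le K e : (K <= e)%nat -> (/ 2) ^ e <= (/ 2) ^ K.
Proof.
  intros HKe. rewrite !pow_inv. apply Rinv_le_contravar; [apply pow_lt; lra|].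
  apply Rle_pow; auto. lra.
Qed.

Lemma exp_sub_1_le y : 0 <= y <= 1 -> exp y - 1 <= 3 * y.
Proof.
  intros Hy. pose proof (exp_ineq1_le (- y)).
  assert (exp y * exp (- y) = 1) by (rewrite <- exp_plus, Rplus_opp_r; apply exp_0).
  assert (exp y <= 3) by (eapply Rle_trans; [apply exp_le, Hy | apply exp_le_3]).
  pose proof (exp_pos y). nra.
Qed.

Lemma exists_Rpower_le r x : r < 0 -> 0 < x -> exists j, (1 <= j)%nat /\ Rpower (INR j) r <= x.
Proof.
  intros Hr Hx. destruct (INR_unbounded (exp (ln x / r))) as [j Hj].
  pose proof (exp_pos (ln x / r)).
  assert (Hj1 : (1 <= j)%nat) by (destruct j; [simpl in Hj; lra | lia]).
  exists j. split; auto.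
  assert (Hln : ln x / r <= ln (INR j)) by (rewrite <- (ln_exp (ln x / r)); apply ln_le; lra).
  rewrite <- (exp_ln x) by auto. apply exp_le.
  apply Rmult_le_compat_neg_l with (r := r) in Hln; [|lra].
  replace (r * (ln x / r)) with (ln x) in Hln by (field; lra). lra.
Qed.

(* Convexity of [x ^ (r + 1)], from [ln (1 - 1/m) <= - 1/m] and [1 + y <= exp y]. *)
Lemma Rpower_sub_Rpower_ge r m : r < -1 -> 2 <= m ->
  - (r + 1) * Rpower m r <= Rpower (m - 1) (r + 1) - Rpower m (r + 1).
Proof.
  intros Hr Hm. set (s := r + 1). assert (Hs : s < 0) by (unfold s; lra).
  assert (Hrs : Rpower m r = Rpower m s / m).
  { unfold s. rewrite Rpower_plus, Rpower_1 by lra. field. lra. }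
  assert (Hln : ln (m - 1) <= ln m - / m).
  { replace (ln m - / m) with (ln (m * exp (- / m)))
      by (rewrite ln_mult, ln_exp; [ring | lra | apply exp_pos]).
    apply ln_le; [lra|]. pose proof (exp_ineq1_le (- / m)).
    replace (m - 1) with (m * (1 + - / m)) by (field; lra).
    apply Rmult_le_compat_l; lra. }
  assert (Hpow : Rpower m s * (1 - s / m) <= Rpower (m - 1) s).
  { apply Rle_trans with (Rpower m s * exp (- s / m)).
    - apply Rmult_le_compat_l; [left; apply exp_pos|].
      replace (1 - s / m) with (1 + - s / m) by (unfold Rdiv; ring). apply exp_ineq1_le.
    - unfold Rpower. rewrite <- exp_plus. apply exp_le.
      assert (0 <= - s * (ln m - / m - ln (m - 1))) by (apply Rmult_le_pos; lra).
      unfold Rdiv. lra. }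
  rewrite Hrs. unfold Rdiv in *. lra.
Qed.

Lemma Rsum_Rpower_le r a n : r < -1 -> (1 <= a)%nat ->
  Rsum (map (fun m => Rpower (INR m) r) (seq (S a) n)) <= Rpower (INR a) (r + 1) / - (r + 1).
Proof.
  intros Hr Ha.
  assert (Htelescope : forall a, (1 <= a)%nat ->
    - (r + 1) * Rsum (map (fun m => Rpower (INR m) r) (seq (S a) n))
      <= Rpower (INR a) (r + 1) - Rpower (INR (a + n)) (r + 1)).
  { clear a Ha. induction n as [|n IH]; intros a Ha.
    - simpl. rewrite Nat.add_0_r. lra.
    - cbn [seq map]. unfold Rsum in *. cbn [fold_right].
      pose proof (IH (S a) ltac:(lia)) as Hrest.
      assert (H2 : 2 <= INR (S a)) by (rewrite S_INR; apply le_INR in Ha; simpl in Ha; lra).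
      pose proof (Rpower_sub_Rpower_ge r (INR (S a)) Hr H2) as Hstep.
      replace (INR (S a) - 1) with (INR a) in Hstep by (rewrite S_INR; ring).
      replace (a + S n)%nat with (S a + n)%nat by lia. lra. }
  pose proof (Htelescope a Ha). pose proof (exp_pos ((r + 1) * ln (INR (a + n)))).
  unfold Rpower in *. apply Rmult_le_reg_l with (- (r + 1)); [lra|].
  field_simplify; lra.
Qed.

Lemma cpow_eq x c : cpow x c =
  (exp (Re c * ln x) * cos (Im c * ln x), exp (Re c * ln x) * sin (Im c * ln x)).
Proof. unfold cpow, Cmult, RtoC; simpl. f_equal; ring. Qed.

Lemma cpow_mult x y c : 0 < x -> 0 < y -> cpow (x * y) c = (cpow x c * cpow y c)%C.
Proof.
  intros Hx Hy. rewrite !cpow_eq, ln_mult by auto. unfold Cmult; simpl.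
  rewrite !Rmult_plus_distr_l, exp_plus, cos_plus, sin_plus. f_equal; ring.
Qed.

Lemma cpow_1 c : cpow 1 c = 1%C.
Proof.
  rewrite cpow_eq, ln_1, !Rmult_0_r, exp_0, cos_0, sin_0.
  unfold RtoC. f_equal; ring.
Qed.

Lemma cpow_pow x c i : 0 < x -> cpow (x ^ i) c = (cpow x c ^ i)%C.
Proof.
  intros Hx. induction i as [|i IH]; simpl; [apply cpow_1|].
  rewrite cpow_mult, IH; auto. now apply pow_lt.
Qed.

Lemma cpow_INR_mult x i c : 0 < x -> cpow x (INR i * c) = (cpow x c ^ i)%C.
Proof.
  intros Hx. rewrite <- cpow_pow by auto. rewrite !cpow_eq, ln_pow by auto.
  unfold Cmult, RtoC, Re, Im; simpl. f_equal; f_equal; f_equal; ring.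
Qed.

Lemma Cmod_cpow x c : Cmod (cpow x c) = Rpower x (Re c).
Proof.
  rewrite cpow_eq. unfold Cmod, Rpower; simpl.
  set (E := exp (Re c * ln x)). set (t := Im c * ln x).
  replace (E * cos t * (E * cos t * 1) + E * sin t * (E * sin t * 1))
    with (E ^ 2 * ((sin t)² + (cos t)²)) by (unfold Rsqr; ring).
  rewrite sin2_cos2, Rmult_1_r. apply sqrt_pow2. left; apply exp_pos.
Qed.

Definition nat_prime (p : nat) : Prop := prime (Z.of_nat p).

Lemma isprime_natP p : isprime_nat p = true <-> nat_prime p.
Proof.
  unfold isprime_nat, nat_prime.
  destruct (prime_dec (Z.of_nat p)); split; auto; discriminate.
Qed.

Lemma nat_prime_ge2 p : nat_prime p -> (2 <= p)%nat.
Proof. intros H. apply prime_ge_2 in H. lia. Qed.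

Lemma Nat_divide_Z a b : Nat.divide a b <-> (Z.of_nat a | Z.of_nat b)%Z.
Proof.
  split.
  - intros [k ->]. exists (Z.of_nat k). now rewrite Nat2Z.inj_mul.
  - intros [k Hk]. destruct (Nat.eq_dec a 0) as [->|Ha].
    + exists 0%nat. lia.
    + exists (Z.to_nat k). nia.
Qed.

Lemma nat_prime_divide_mul p a b : nat_prime p ->
  Nat.divide p (a * b) -> Nat.divide p a \/ Nat.divide p b.
Proof.
  intros Hp H. rewrite Nat_divide_Z, Nat2Z.inj_mul in H.
  rewrite !Nat_divide_Z. now apply prime_mult.
Qed.

Lemma nat_prime_gauss p d x : nat_prime p -> ~ Nat.divide p d ->
  Nat.divide d (p * x) -> Nat.divide d x.
Proof.
  intros Hp Hd H. rewrite Nat_divide_Z in *. rewrite Nat2Z.inj_mul in H.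
  apply Gauss with (Z.of_nat p); auto.
  apply rel_prime_sym, prime_rel_prime; auto.
Qed.

Lemma nat_prime_divide_pow p q e : nat_prime p -> nat_prime q ->
  Nat.divide p (q ^ e) -> p = q.
Proof.
  intros Hp Hq. induction e as [|e IH]; simpl; intros H.
  - apply Nat.divide_pos_le in H; [|lia]. apply nat_prime_ge2 in Hp. lia.
  - destruct (nat_prime_divide_mul _ _ _ Hp H) as [Hpq|]; auto.
    rewrite Nat_divide_Z in Hpq. apply Nat2Z.inj, prime_div_prime; auto.
Qed.

Lemma exists_prime_divisor n : (2 <= n)%nat -> exists p, nat_prime p /\ Nat.divide p n.
Proof.
  induction n as [n IH] using lt_wf_ind. intros Hn.
  destruct (prime_dec (Z.of_nat n)) as [Hp|Hp].
  - exists n. split; auto. apply Nat.divide_refl.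
  - destruct (not_prime_divide (Z.of_nat n)) as [z [Hz Hzn]]; [lia|auto|].
    destruct (IH (Z.to_nat z)) as [p [Hp' Hpz]]; try lia.
    exists p. split; auto. apply Nat.divide_trans with (Z.to_nat z); auto.
    apply Nat_divide_Z. now rewrite Z2Nat.id by lia.
Qed.

Definition divisors (n : nat) : list nat :=
  filter (fun d => Nat.eqb (n mod d) 0) (seq 1 n).

Lemma in_divisors n d : (1 <= n)%nat -> In d (divisors n) <-> Nat.divide d n.
Proof.
  intros Hn. unfold divisors. rewrite filter_In, in_seq, Nat.eqb_eq, Nat.Lcm0.mod_divide.
  split; [tauto|]. intros Hd. split; auto.
  destruct d as [|d]; [apply Nat.divide_0_l in Hd; lia|].
  apply Nat.divide_pos_le in Hd; lia.
Qed.

Lemma divide_prime_pow_mul p m k d : nat_prime p -> ~ Nat.divide p m ->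
  Nat.divide d (p ^ k * m) ->
  exists i e, (i <= k)%nat /\ Nat.divide e m /\ d = (p ^ i * e)%nat.
Proof.
  intros Hp Hpm. pose proof (nat_prime_ge2 p Hp).
  revert d. induction k as [|k IH]; intros d Hd.
  - exists 0%nat, d. simpl in *. rewrite Nat.add_0_r in Hd. repeat split; auto; lia.
  - rewrite Nat.pow_succ_r', <- Nat.mul_assoc in Hd.
    destruct (classic (Nat.divide p d)) as [[d' ->]|Hnd].
    + rewrite (Nat.mul_comm d') in Hd. apply Nat.mul_divide_cancel_l in Hd; [|lia].
      destruct (IH d' Hd) as [i [e [Hi [He ->]]]].
      exists (S i), e. repeat split; auto; try lia. rewrite Nat.pow_succ_r'. lia.
    + destruct (IH d (nat_prime_gauss _ _ _ Hp Hnd Hd)) as [i [e [Hi [He ->]]]].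
      exists i, e. repeat split; auto.
Qed.

Lemma prime_pow_mul_inj p i j d e : nat_prime p -> ~ Nat.divide p d -> ~ Nat.divide p e ->
  (p ^ i * d = p ^ j * e)%nat -> i = j.
Proof.
  intros Hp Hd He. pose proof (nat_prime_ge2 p Hp).
  revert j. induction i as [|i IH]; intros [|j] Hij; simpl in Hij; auto.
  - exfalso. apply Hd. exists (p ^ j * e)%nat. lia.
  - exfalso. apply He. exists (p ^ i * d)%nat. lia.
  - f_equal. apply IH. apply Nat.mul_cancel_l with p; lia.
Qed.

Lemma divisors_prime_pow_mul p m k : nat_prime p -> (1 <= m)%nat -> ~ Nat.divide p m ->
  Permutation (divisors (p ^ k * m))
    (flat_map (fun i => map (fun d => p ^ i * d)%nat (divisors m)) (seq 0 (S k))).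
Proof.
  intros Hp Hm Hpm. pose proof (nat_prime_ge2 p Hp).
  assert (Hpow : forall i, (0 < p ^ i)%nat) by (intros; apply Nat.neq_0_lt_0, Nat.pow_nonzero; lia).
  assert (Hcoprime : forall d, In d (divisors m) -> ~ Nat.divide p d).
  { intros d Hd Hpd. apply in_divisors in Hd; auto. apply Hpm. now apply Nat.divide_trans with d. }
  apply NoDup_Permutation.
  - apply NoDup_filter, seq_NoDup.
  - apply NoDup_flat_map; [apply seq_NoDup| |].
    + intros i _. apply FinFun.Injective_map_NoDup; [|apply NoDup_filter, seq_NoDup].
      intros d e Hde. apply Nat.mul_cancel_l with (p ^ i)%nat; auto. specialize (Hpow i). lia.
    + intros i j x _ _ Hi Hj. rewrite in_map_iff in Hi, Hj.
      destruct Hi as [d [<- Hd]], Hj as [e [Hde He]].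
      apply (prime_pow_mul_inj p i j d e); auto.
  - intros x. specialize (Hpow k). rewrite in_divisors, in_flat_map by nia. split.
    + intros Hx. destruct (divide_prime_pow_mul p m k x Hp Hpm Hx) as [i [e [Hi [He ->]]]].
      exists i. rewrite in_seq, in_map_iff. split; [lia|]. exists e. rewrite in_divisors; auto.
    + intros [i [Hi Hx]]. rewrite in_seq in Hi. rewrite in_map_iff in Hx.
      destruct Hx as [d [<- Hd]]. apply in_divisors in Hd; auto.
      replace k with (i + (k - i))%nat by lia. rewrite Nat.pow_add_r, <- Nat.mul_assoc.
      apply Nat.mul_divide_mono_l, Nat.divide_mul_r, Hd.
Qed.

(** * Multiplicativity of sigma_c *)

Lemma sigma_pp_Some c p k : (1 <= p)%nat ->
  sigma_pp c p (Some k) = Csum (map (fun i => cpow (INR p) c ^ i)%C (seq 0 (S k))).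
Proof.
  intros Hp. unfold sigma_pp. f_equal. apply map_ext. intros i.
  apply cpow_INR_mult, lt_0_INR. lia.
Qed.

Lemma sigma_nat_prime_pow_mul c p m k : nat_prime p -> (1 <= m)%nat -> ~ Nat.divide p m ->
  sigma_nat c (p ^ k * m) = (sigma_pp c p (Some k) * sigma_nat c m)%C.
Proof.
  intros Hp Hm Hpm. pose proof (nat_prime_ge2 p Hp).
  unfold sigma_nat. fold (divisors (p ^ k * m)). fold (divisors m).
  rewrite (Csum_perm _ _ (Permutation_map _ (divisors_prime_pow_mul p m k Hp Hm Hpm))).
  rewrite Csum_flat_map, sigma_pp_Some, <- Csum_mult_r by lia.
  apply f_equal, map_ext. intros i.
  rewrite map_map, <- Csum_mult_l. apply f_equal, map_ext_in. intros d Hd.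
  apply in_divisors in Hd; auto.
  assert (0 < INR d) by (apply lt_0_INR; destruct d; [apply Nat.divide_0_l in Hd|]; lia).
  assert (0 < INR p) by (apply lt_0_INR; lia).
  rewrite mult_INR, pow_INR, cpow_mult, cpow_pow; auto. now apply pow_lt.
Qed.

Definition primes_upto (N : nat) : list nat := filter isprime_nat (seq 0 (S N)).

Lemma in_primes_upto N p : In p (primes_upto N) <-> (p <= N)%nat /\ nat_prime p.
Proof.
  unfold primes_upto. rewrite filter_In, in_seq, isprime_natP.
  split; intros [? ?]; split; auto; lia.
Qed.

Lemma primes_upto_0 : primes_upto 0 = [].
Proof.
  unfold primes_upto, isprime_nat. simpl.
  destruct (prime_dec 0) as [H|]; [now apply not_prime_0 in H | auto].
Qed.

Lemma primes_upto_S N :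
  primes_upto (S N) = primes_upto N ++ (if isprime_nat (S N) then [S N] else []).
Proof.
  unfold primes_upto. rewrite (seq_S (S N)), filter_app. simpl.
  now destruct (isprime_nat (S N)).
Qed.

Definition prod_prime_pow (N : nat) (b : nat -> nat) : nat :=
  fold_right Nat.mul 1%nat (map (fun p => p ^ b p)%nat (primes_upto N)).

Lemma prod_prime_pow_0 b : prod_prime_pow 0 b = 1%nat.
Proof. unfold prod_prime_pow. now rewrite primes_upto_0. Qed.

Lemma prod_prime_pow_S N b : prod_prime_pow (S N) b =
  (prod_prime_pow N b * if isprime_nat (S N) then S N ^ b (S N) else 1)%nat.
Proof.
  unfold prod_prime_pow. rewrite primes_upto_S, map_app.
  induction (map _ (primes_upto N)) as [|x l IH]; simpl.
  - destruct (isprime_nat (S N)); simpl; lia.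
  - rewrite IH. lia.
Qed.

Lemma sigma_partial_0 c a : sigma_partial c a 0 = 1%C.
Proof. unfold sigma_partial. fold (primes_upto 0). now rewrite primes_upto_0. Qed.

Lemma sigma_partial_S c a N : sigma_partial c a (S N) =
  (sigma_partial c a N * if isprime_nat (S N) then sigma_pp c (S N) (a (S N)) else 1)%C.
Proof.
  unfold sigma_partial. fold (primes_upto (S N)). fold (primes_upto N).
  rewrite primes_upto_S, map_app, Cprod_app. destruct (isprime_nat (S N)); simpl; ring.
Qed.

Lemma prod_prime_pow_pos N b : (1 <= prod_prime_pow N b)%nat.
Proof.
  induction N as [|N IH]; [now rewrite prod_prime_pow_0|].
  rewrite prod_prime_pow_S. destruct (isprime_nat (S N)); [|lia].
  assert (0 < S N ^ b (S N))%nat by (apply Nat.neq_0_lt_0, Nat.pow_nonzero; lia). nia.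
Qed.

Lemma prime_not_divide_prod_prime_pow q N b : nat_prime q -> (N < q)%nat ->
  ~ Nat.divide q (prod_prime_pow N b).
Proof.
  intros Hq. pose proof (nat_prime_ge2 q Hq).
  induction N as [|N IH]; intros HN Hdiv.
  - rewrite prod_prime_pow_0 in Hdiv. apply Nat.divide_pos_le in Hdiv; lia.
  - rewrite prod_prime_pow_S in Hdiv.
    destruct (nat_prime_divide_mul _ _ _ Hq Hdiv) as [Hd|Hd]; [apply IH; auto; lia|].
    destruct (isprime_nat (S N)) eqn:E.
    + apply isprime_natP in E. apply nat_prime_divide_pow in Hd; auto. lia.
    + apply Nat.divide_pos_le in Hd; lia.
Qed.

Lemma sigma_nat_1 c : sigma_nat c 1 = 1%C.
Proof. unfold sigma_nat. simpl. rewrite cpow_1. unfold Csum; simpl. ring. Qed.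

Lemma sigma_nat_prod_prime_pow c N b :
  sigma_nat c (prod_prime_pow N b) = sigma_partial c (fun p => Some (b p)) N.
Proof.
  induction N as [|N IH].
  - rewrite prod_prime_pow_0, sigma_partial_0. apply sigma_nat_1.
  - rewrite prod_prime_pow_S, sigma_partial_S. destruct (isprime_nat (S N)) eqn:E.
    + apply isprime_natP in E.
      rewrite Nat.mul_comm, sigma_nat_prime_pow_mul, IH; auto.
      * ring.
      * apply prod_prime_pow_pos.
      * apply prime_not_divide_prod_prime_pow; auto.
    + rewrite Nat.mul_1_r, IH. ring.
Qed.

Lemma prod_prime_pow_ext N b b' : (forall p, (p <= N)%nat -> b p = b' p) ->
  prod_prime_pow N b = prod_prime_pow N b'.
Proof.
  intros H. unfold prod_prime_pow. f_equal. apply map_ext_in. intros p Hp.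
  apply in_primes_upto in Hp. now rewrite H by apply Hp.
Qed.

Lemma prod_prime_pow_stable M N b : (M <= N)%nat -> (forall p, (M < p)%nat -> b p = 0%nat) ->
  prod_prime_pow N b = prod_prime_pow M b.
Proof.
  intros HMN Hb. induction HMN as [|N HMN IH]; auto.
  rewrite prod_prime_pow_S, IH, Hb by lia. destruct (isprime_nat (S N)); simpl; lia.
Qed.

Definition upd {A} (f : nat -> A) (q : nat) (v : A) : nat -> A :=
  fun p => if Nat.eqb p q then v else f p.

Lemma prod_prime_pow_upd q N b : nat_prime q -> (q <= N)%nat ->
  prod_prime_pow N (upd b q (S (b q))) = (q * prod_prime_pow N b)%nat.
Proof.
  intros Hq. pose proof (nat_prime_ge2 q Hq).
  induction N as [|N IH]; intros HN; [lia|].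
  rewrite !prod_prime_pow_S. unfold upd at 2. destruct (Nat.eq_dec q (S N)) as [->|Hne].
  - rewrite Nat.eqb_refl, (proj2 (isprime_natP (S N)) Hq).
    rewrite (prod_prime_pow_ext N (upd b (S N) (S (b (S N)))) b).
    + simpl. lia.
    + intros p Hp. unfold upd. destruct (Nat.eqb_spec p (S N)); auto; lia.
  - rewrite IH by lia. destruct (Nat.eqb_spec (S N) q); [lia|].
    destruct (isprime_nat (S N)); lia.
Qed.

Lemma exists_prod_prime_pow n : (1 <= n)%nat ->
  exists b, (forall p, (n < p)%nat -> b p = 0%nat) /\ prod_prime_pow n b = n.
Proof.
  induction n as [n IH] using lt_wf_ind. intros Hn.
  destruct (Nat.eq_dec n 1) as [->|Hn1].
  - exists (fun _ => 0%nat). split; reflexivity.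
  - destruct (exists_prime_divisor n) as [q [Hq [k Hk]]]; [lia|].
    pose proof (nat_prime_ge2 q Hq).
    assert (Hk1 : (1 <= k)%nat) by nia. assert (Hqn : (q <= n)%nat) by nia.
    destruct (IH k) as [b [Hb Hbk]]; [nia|auto|].
    exists (upd b q (S (b q))). split.
    + intros p Hp. unfold upd. destruct (Nat.eqb_spec p q); [lia|]. apply Hb. nia.
    + rewrite prod_prime_pow_upd, (prod_prime_pow_stable k n); auto; nia.
Qed.

Lemma sigma_partial_stable c M N b : (M <= N)%nat -> (forall p, (M < p)%nat -> b p = 0%nat) ->
  sigma_partial c (fun p => Some (b p)) N = sigma_partial c (fun p => Some (b p)) M.
Proof.
  intros HMN Hb. now rewrite <- !sigma_nat_prod_prime_pow, (prod_prime_pow_stable M N).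
Qed.

(** * Local factors *)

Lemma Cmod_cpow_prime_le c p : Re c <= -1 -> nat_prime p -> Cmod (cpow (INR p) c) <= / 2.
Proof.
  intros hc Hp. rewrite Cmod_cpow. apply Rpower_le_half; auto.
  apply nat_prime_ge2, le_INR in Hp. simpl in Hp. lra.
Qed.

Lemma Cmod_inv_one_minus_le w : Cmod w <= / 2 -> (1 - w)%C <> 0 /\ Cmod (/ (1 - w)) <= 2.
Proof.
  intros Hw.
  assert (H : 1 <= Cmod (1 - w) + Cmod w).
  { rewrite <- Cmod_1 at 1. replace (RtoC 1) with (1 - w + w)%C at 1 by ring. apply Cmod_triangle. }
  assert (Hne : (1 - w)%C <> 0) by (intros E; rewrite E, Cmod_0 in H; lra).
  split; auto. rewrite Cmod_inv by auto.
  replace 2 with (/ (/ 2)) by field. apply Rinv_le_contravar; lra.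
Qed.

Lemma sigma_pp_Some_sub_None_le c p k : Re c <= -1 -> nat_prime p ->
  Cmod (sigma_pp c p (Some k) - sigma_pp c p None) <= 2 * Cmod (cpow (INR p) c) ^ S k.
Proof.
  intros hc Hp. pose proof (nat_prime_ge2 p Hp).
  set (w := cpow (INR p) c).
  destruct (Cmod_inv_one_minus_le w (Cmod_cpow_prime_le c p hc Hp)) as [Hne Hinv].
  assert (E : sigma_pp c p (Some k) = (/ (1 - w) * (1 - w ^ S k))%C).
  { rewrite sigma_pp_Some, <- Csum_geometric by lia. fold w. field. auto. }
  rewrite E. simpl sigma_pp. fold w.
  replace (/ (1 - w) * (1 - w ^ S k) - / (1 - w))%C with (- (/ (1 - w) * w ^ S k))%C by ring.
  rewrite Cmod_opp, Cmod_mult, Cmod_pow.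
  apply Rmult_le_compat_r; auto. apply pow_le, Cmod_ge_0.
Qed.

Lemma sigma_pp_None_sub_1_le c p : Re c <= -1 -> nat_prime p ->
  Cmod (sigma_pp c p None - 1) <= 2 * Cmod (cpow (INR p) c).
Proof.
  intros hc Hp. set (w := cpow (INR p) c).
  destruct (Cmod_inv_one_minus_le w (Cmod_cpow_prime_le c p hc Hp)) as [Hne Hinv].
  simpl sigma_pp. fold w.
  replace (/ (1 - w) - 1)%C with (/ (1 - w) * w)%C by (field; auto).
  rewrite Cmod_mult. apply Rmult_le_compat_r; auto. apply Cmod_ge_0.
Qed.

Lemma sigma_pp_sub_1_le c p a : Re c <= -1 -> nat_prime p ->
  Cmod (sigma_pp c p a - 1) <= 4 * Rpower (INR p) (Re c).
Proof.
  intros hc Hp. rewrite <- Cmod_cpow.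
  set (r := Cmod (cpow (INR p) c)).
  assert (Hr : 0 <= r <= / 2) by (split; [apply Cmod_ge_0 | apply Cmod_cpow_prime_le; auto]).
  pose proof (sigma_pp_None_sub_1_le c p hc Hp) as HNone.
  destruct a as [k|]; [|fold r in HNone; lra].
  pose proof (sigma_pp_Some_sub_None_le c p k hc Hp) as HSome. fold r in HSome, HNone.
  assert (r ^ k <= 1) by (rewrite <- (pow1 k); apply pow_incr; lra).
  change (r ^ S k) with (r * r ^ k) in HSome.
  replace (sigma_pp c p (Some k) - 1)%C
    with ((sigma_pp c p (Some k) - sigma_pp c p None) + (sigma_pp c p None - 1))%C by ring.
  eapply Rle_trans; [apply Cmod_triangle|]. nra.
Qed.

Lemma Cmod_sigma_pp_le c p a : Re c <= -1 -> nat_prime p -> Cmod (sigma_pp c p a) <= 3.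
Proof.
  intros hc Hp. pose proof (sigma_pp_sub_1_le c p a hc Hp).
  pose proof (Cmod_cpow_prime_le c p hc Hp). rewrite Cmod_cpow in *.
  replace (sigma_pp c p a) with (sigma_pp c p a - 1 + 1)%C by ring.
  eapply Rle_trans; [apply Cmod_triangle|]. rewrite Cmod_1. lra.
Qed.

(* [b] approximates [a] at level [K] in the one-point compactification of [nat]. *)
Definition approx_exponent (K : nat) (a b : option nat) : Prop :=
  match a, b with
  | Some e, _ => b = Some e
  | None, Some e => (K <= e)%nat
  | None, None => True
  end.

Lemma approx_exponent_mono K K' a b : (K <= K')%nat ->
  approx_exponent K' a b -> approx_exponent K a b.
Proof. destruct a, b; simpl; auto; lia. Qed.

Lemma sigma_pp_approx_le c p K a b : Re c <= -1 -> nat_prime p -> approx_exponent K a b ->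
  Cmod (sigma_pp c p a - sigma_pp c p b) <= (/ 2) ^ K.
Proof.
  intros hc Hp Hab.
  assert (Hzero : forall x, Cmod (x - x) <= (/ 2) ^ K).
  { intros x. replace (x - x)%C with (RtoC 0) by ring. rewrite Cmod_0. apply pow_le. lra. }
  destruct a as [e|], b as [e'|]; simpl in Hab;
    try discriminate; try (injection Hab as ->); try apply Hzero.
  rewrite <- Cmod_opp, Copp_minus_distr.
  eapply Rle_trans; [apply sigma_pp_Some_sub_None_le; auto|].
  eapply Rle_trans; [|apply pow_half_le, Hab].
  replace ((/ 2) ^ e') with (2 * (/ 2) ^ S e') by (simpl; field).
  apply Rmult_le_compat_l; [lra|]. apply pow_incr.
  split; [apply Cmod_ge_0 | apply Cmod_cpow_prime_le; auto].
Qed.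

(** * Uniform convergence of the partial products *)

Definition sigma_range (c : C) (a : steinitz) (lo n : nat) : C :=
  Cprod (map (fun p => sigma_pp c p (a p)) (filter isprime_nat (seq lo n))).

Lemma sigma_partial_split c a j N : (j <= N)%nat ->
  sigma_partial c a N = (sigma_partial c a j * sigma_range c a (S j) (N - j))%C.
Proof.
  intros H. unfold sigma_partial, sigma_range.
  replace (S N) with (S j + (N - j))%nat at 1 by lia.
  now rewrite seq_app, filter_app, map_app, Cprod_app.
Qed.

(* [4 j^(r+1) / -(r+1)] bounds [sum_(m > j) 4 m^r] by comparison with an integral. *)
Definition tail_bound (r : R) (j : nat) : R := exp (4 * Rpower (INR j) (r + 1) / - (r + 1)) - 1.

Lemma sigma_range_sub_1_le c a j n : Re c < -1 -> (1 <= j)%nat ->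
  Cmod (sigma_range c a (S j) n - 1) <= tail_bound (Re c) j.
Proof.
  intros hc Hj. unfold sigma_range, tail_bound.
  eapply Rle_trans.
  { apply Cprod_map_sub_1_le with (d := fun p => 4 * Rpower (INR p) (Re c)).
    intros p Hp. apply filter_In in Hp. apply sigma_pp_sub_1_le; [lra|].
    now apply isprime_natP. }
  apply Rplus_le_compat_r, exp_le.
  eapply Rle_trans; [apply Rsum_map_filter_le; intros; left; apply Rmult_lt_0_compat;
    [lra | apply exp_pos]|].
  rewrite Rsum_map_mult_l. unfold Rdiv. rewrite Rmult_assoc.
  apply Rmult_le_compat_l; [lra|]. now apply Rsum_Rpower_le.
Qed.

Lemma Cmod_sigma_partial_le c a N : Re c < -1 ->
  Cmod (sigma_partial c a N) <= exp (4 / - (Re c + 1)).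
Proof.
  intros hc.
  assert (H1 : 1 <= exp (4 / - (Re c + 1))).
  { pose proof (exp_ineq1_le (4 / - (Re c + 1))).
    assert (0 < 4 / - (Re c + 1)) by (apply Rdiv_lt_0_compat; lra). lra. }
  destruct N as [|N]; [now rewrite sigma_partial_0, Cmod_1|].
  rewrite (sigma_partial_split c a 1) by lia.
  replace (sigma_partial c a 1) with (RtoC 1) by reflexivity.
  pose proof (sigma_range_sub_1_le c a 1 (S N - 1) hc (le_n 1)) as Htail.
  unfold tail_bound, Rpower in Htail. simpl INR in Htail.
  rewrite ln_1, Rmult_0_r, exp_0, Rmult_1_r in Htail.
  replace (1 * sigma_range c a 2 (S N - 1))%C with (sigma_range c a 2 (S N - 1) - 1 + 1)%C by ring.
  eapply Rle_trans; [apply Cmod_triangle|]. rewrite Cmod_1. lra.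
Qed.

Lemma exists_tail_bound_le r t : r < -1 -> 0 < t -> exists j, (1 <= j)%nat /\ tail_bound r j <= t.
Proof.
  intros Hr Ht. pose proof (Rmin_l 1 (t / 3)). pose proof (Rmin_r 1 (t / 3)).
  assert (Hy : 0 < Rmin 1 (t / 3)) by (apply Rmin_pos; lra).
  set (y := Rmin 1 (t / 3)) in *.
  destruct (exists_Rpower_le (r + 1) (y * - (r + 1) / 4)) as [j [Hj Hpow]]; [lra| |].
  { apply Rdiv_lt_0_compat; [apply Rmult_lt_0_compat|]; lra. }
  exists j. split; auto. unfold tail_bound.
  assert (Hnonneg : 0 <= 4 * Rpower (INR j) (r + 1) / - (r + 1)).
  { apply Rmult_le_pos; [|left; apply Rinv_0_lt_compat; lra].
    apply Rmult_le_pos; [lra | left; apply exp_pos]. }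
  assert (Hle : 4 * Rpower (INR j) (r + 1) / - (r + 1) <= y).
  { apply Rmult_le_reg_r with (- (r + 1)); [lra|].
    field_simplify; [|lra]. apply Rmult_le_reg_r with (/ 4); [lra|].
    unfold Rdiv in Hpow. lra. }
  pose proof (exp_sub_1_le (4 * Rpower (INR j) (r + 1) / - (r + 1)) ltac:(split; lra)). lra.
Qed.

Lemma exists_half_pow_lt M eps : 0 < eps -> exists K, M * (/ 2) ^ K < eps.
Proof.
  intros He. destruct (pow_lt_1_zero (/ 2)) with (y := eps / (Rabs M + 1)) as [K HK].
  - rewrite Rabs_pos_eq; lra.
  - apply Rdiv_lt_0_compat; [lra|]. pose proof (Rabs_pos M). lra.
  - exists K. specialize (HK K (le_n _)). rewrite Rabs_pos_eq in HK by (apply pow_le; lra).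
    pose proof (Rabs_pos M). pose proof (Rle_abs M).
    assert (0 <= (/ 2) ^ K) by (apply pow_le; lra).
    apply Rmult_lt_compat_l with (r := Rabs M + 1) in HK; [|lra].
    replace ((Rabs M + 1) * (eps / (Rabs M + 1))) with eps in HK by (field; lra). nra.
Qed.

Definition steinitz_approx (j K : nat) (a b : steinitz) : Prop :=
  forall p, (p <= j)%nat -> nat_prime p -> approx_exponent K (a p) (b p).

Lemma steinitz_approx_mono j K K' a b : (K <= K')%nat ->
  steinitz_approx j K' a b -> steinitz_approx j K a b.
Proof. intros HK H p Hp Hpp. apply approx_exponent_mono with K'; auto. Qed.

Lemma sigma_partial_approx_le c j K a b : Re c < -1 -> steinitz_approx j K a b ->
  Cmod (sigma_partial c a j - sigma_partial c b j)
    <= INR (length (primes_upto j)) * 3 ^ length (primes_upto j) * (/ 2) ^ K.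
Proof.
  intros hc Hab. apply Cprod_map_sub_le; [lra | apply pow_le; lra|].
  intros p Hp. apply in_primes_upto in Hp. destruct Hp as [Hpj Hp].
  repeat split; try apply Cmod_sigma_pp_le; try lra; auto.
  apply sigma_pp_approx_le; auto. lra.
Qed.

Lemma sigma_partial_uniform c eps : Re c < -1 -> 0 < eps ->
  exists j K, forall a b N, (j <= N)%nat -> steinitz_approx j K a b ->
    Cmod (sigma_partial c a N - sigma_partial c b N) < eps.
Proof.
  intros hc He. set (M := exp (4 / - (Re c + 1))).
  assert (HM : 0 < M) by apply exp_pos.
  destruct (exists_tail_bound_le (Re c) (Rmin 1 (eps / (8 * M)))) as [j [Hj Htail]]; auto.
  { apply Rmin_pos; [lra|]. apply Rdiv_lt_0_compat; lra. }
  pose proof (Rmin_l 1 (eps / (8 * M))). pose proof (Rmin_r 1 (eps / (8 * M))).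
  set (n := length (primes_upto j)).
  destruct (exists_half_pow_lt (INR n * 3 ^ n) (eps / 4)) as [K HK]; [lra|].
  exists j, K. intros a b N HN Hab.
  rewrite !(sigma_partial_split c _ j N HN).
  pose proof (sigma_partial_approx_le c j K a b hc Hab) as Hhead. fold n in Hhead.
  pose proof (Cmod_sigma_partial_le c b j hc) as Hb. fold M in Hb.
  pose proof (sigma_range_sub_1_le c a j (N - j) hc Hj) as Hta.
  pose proof (sigma_range_sub_1_le c b j (N - j) hc Hj) as Htb.
  set (A := sigma_partial c a j) in *. set (B := sigma_partial c b j) in *.
  set (TA := sigma_range c a (S j) (N - j)) in *. set (TB := sigma_range c b (S j) (N - j)) in *.
  set (d := tail_bound (Re c) j) in *.
  assert (HTA : Cmod TA <= 2).
  { replace TA with (TA - 1 + 1)%C by ring.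
    eapply Rle_trans; [apply Cmod_triangle|]. rewrite Cmod_1. lra. }
  assert (HTAB : Cmod (TA - TB) <= 2 * d).
  { replace (TA - TB)%C with ((TA - 1) + - (TB - 1))%C by ring.
    eapply Rle_trans; [apply Cmod_triangle|]. rewrite Cmod_opp. lra. }
  replace (A * TA - B * TB)%C with ((A - B) * TA + B * (TA - TB))%C by ring.
  eapply Rle_lt_trans; [apply Cmod_triangle|]. rewrite !Cmod_mult.
  assert (Cmod (A - B) * Cmod TA <= eps / 4 * 2)
    by (apply Rmult_le_compat; try apply Cmod_ge_0; lra).
  assert (Cmod B * Cmod (TA - TB) <= M * (2 * (eps / (8 * M))))
    by (apply Rmult_le_compat; try apply Cmod_ge_0; lra).
  replace (M * (2 * (eps / (8 * M)))) with (eps / 4) in * by (field; lra).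
  lra.
Qed.

(** * The closure of sigma_c(N) *)

Lemma lim_seq_C_spec (u : nat -> C) z : filterlim u eventually (locally z) <->
  forall eps, 0 < eps -> exists N, forall n, (N <= n)%nat -> Cmod (u n - z) < eps.
Proof.
  rewrite filterlim_locally. split.
  - intros H eps He.
    pose proof (@norm_factor_gt_0 C_AbsRing C_NormedModule) as Hf.
    set (nf := @norm_factor C_AbsRing C_NormedModule) in *.
    destruct (H (mkposreal (eps / nf) ltac:(apply Rdiv_lt_0_compat; auto))) as [N HN].
    exists N. intros n Hn. specialize (HN n Hn).
    apply (@norm_compat2 C_AbsRing C_NormedModule) in HN. simpl in HN. fold nf in HN.
    now replace (nf * (eps / nf)) with eps in HN by (field; lra).
  - intros H eps. destruct (H eps (cond_pos eps)) as [N HN].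
    exists N. intros n Hn. apply (@norm_compat1 C_AbsRing C_NormedModule), HN, Hn.
Qed.

Lemma sigma_S_in_closure c z : Re c < -1 -> sigma_S_set c z -> in_closure (sigma_N_set c) z.
Proof.
  intros hc [a Ha] eps He.
  destruct (sigma_partial_uniform c (eps / 2) hc) as [j [K Hunif]]; [lra|].
  unfold sigma_steinitz_is in Ha. rewrite lim_seq_C_spec in Ha.
  destruct (Ha (eps / 2)) as [N0 HN0]; [lra|].
  set (N := Nat.max j N0).
  set (b := fun p => if Nat.leb p N then match a p with Some e => e | None => K end else 0%nat).
  exists (sigma_nat c (prod_prime_pow N b)). split.
  - exists (prod_prime_pow N b). split; auto. apply prod_prime_pow_pos.
  - assert (Hab : steinitz_approx j K a (fun p => Some (b p))).
    { intros p Hp _. unfold b. rewrite (proj2 (Nat.leb_le p N)) by lia.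
      destruct (a p); simpl; auto. }
    specialize (Hunif a _ N ltac:(lia) Hab). specialize (HN0 N ltac:(lia)).
    rewrite sigma_nat_prod_prime_pow.
    set (B := sigma_partial c (fun p => Some (b p)) N) in *.
    replace (B - z)%C with ((sigma_partial c a N - z) - (sigma_partial c a N - B))%C by ring.
    eapply Rle_lt_trans; [apply Cmod_triangle|]. rewrite Cmod_opp. lra.
Qed.

Lemma uniform_failure_lt (Q : nat -> R -> nat -> Prop) :
  (forall K K' eps eps' e, (K <= K')%nat -> eps' <= eps -> Q K' eps' e -> Q K eps e) ->
  (forall e, exists K eps, 0 < eps /\ ~ Q K eps e) ->
  forall n, exists K eps, 0 < eps /\ forall e, (e < n)%nat -> ~ Q K eps e.
Proof.
  intros Hmono Hfail n. induction n as [|n [K [eps [Heps IH]]]].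
  - exists 0%nat, 1. split; [lra|]. intros e He. lia.
  - destruct (Hfail n) as [Kn [epsn [Hepsn Hn]]].
    exists (Nat.max K Kn), (Rmin eps epsn). split; [now apply Rmin_pos|].
    pose proof (Rmin_l eps epsn). pose proof (Rmin_r eps epsn).
    intros e He HQ. destruct (Nat.eq_dec e n) as [->|Hne].
    + apply Hn. apply (Hmono _ (Nat.max K Kn) _ (Rmin eps epsn)); auto. lia.
    + apply (IH e); [lia|]. apply (Hmono _ (Nat.max K Kn) _ (Rmin eps epsn)); auto. lia.
Qed.

Lemma prefix_choice {A} (P : (nat -> A) -> nat -> Prop) (f0 : nat -> A) :
  (forall f g j, (forall p, (p <= j)%nat -> f p = g p) -> P f j -> P g j) ->
  P f0 0%nat ->
  (forall f j, P f j -> exists v, P (upd f (S j) v) (S j)) ->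
  exists f, forall j, P f j.
Proof.
  intros Hext H0 Hstep.
  set (next := fun f j => epsilon (inhabits (f0 0%nat)) (fun v => P (upd f (S j) v) (S j))).
  set (F := fix F (j : nat) : nat -> A :=
         match j with O => f0 | S j' => upd (F j') (S j') (next (F j') j') end).
  assert (HF : forall j, P (F j) j).
  { induction j as [|j IH]; auto.
    change (P (upd (F j) (S j) (next (F j) j)) (S j)). apply epsilon_spec, Hstep, IH. }
  assert (Hstable : forall p d, F (p + d)%nat p = F p p).
  { intros p d. induction d as [|d IH]; [now rewrite Nat.add_0_r|].
    rewrite Nat.add_succ_r. simpl. unfold upd. destruct (Nat.eqb_spec p (S (p + d))); [lia|auto]. }
  exists (fun p => F p p). intros j. apply Hext with (F j); auto.
  intros p Hp. replace j with (p + (j - p))%nat by lia. apply Hstable.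
Qed.

Definition approximable (c z : C) (j : nat) (a : steinitz) : Prop :=
  forall K eps, 0 < eps -> exists b M, (forall p, (M < p)%nat -> b p = 0%nat) /\
    steinitz_approx j K a (fun p => Some (b p)) /\
    Cmod (sigma_partial c (fun p => Some (b p)) M - z) < eps.

Lemma approximable_0 c z a : in_closure (sigma_N_set c) z -> approximable c z 0 a.
Proof.
  intros Hz K eps He. destruct (Hz eps He) as [w [[n [Hn ->]] Hw]].
  destruct (exists_prod_prime_pow n Hn) as [b [Hb Hbn]].
  exists b, n. repeat split; auto.
  - intros p Hp Hpp. apply nat_prime_ge2 in Hpp. lia.
  - now rewrite <- sigma_nat_prod_prime_pow, Hbn.
Qed.

Lemma approximable_ext c z j a a' : (forall p, (p <= j)%nat -> a p = a' p) ->
  approximable c z j a -> approximable c z j a'.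
Proof.
  intros Haa' Ha K eps He. destruct (Ha K eps He) as [b [M [Hb [Hab Hz]]]].
  exists b, M. repeat split; auto. intros p Hp Hpp. rewrite <- Haa' by auto. now apply Hab.
Qed.

Lemma steinitz_approx_upd_S j K a v b : steinitz_approx j K a b ->
  approx_exponent K v (b (S j)) -> steinitz_approx (S j) K (upd a (S j) v) b.
Proof.
  intros Hab Hv p Hp Hpp. unfold upd. destruct (Nat.eqb_spec p (S j)) as [->|Hne]; auto.
  apply Hab; auto. lia.
Qed.

Lemma approximable_S c z j a : approximable c z j a ->
  exists v, approximable c z (S j) (upd a (S j) v).
Proof.
  intros Ha.
  set (Q := fun K eps e => exists b M, (forall p, (M < p)%nat -> b p = 0%nat) /\
    steinitz_approx j K a (fun p => Some (b p)) /\ b (S j) = e /\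
    Cmod (sigma_partial c (fun p => Some (b p)) M - z) < eps).
  destruct (classic (exists e, forall K eps, 0 < eps -> Q K eps e)) as [[e He]|Hnone].
  - exists (Some e). intros K eps Heps.
    destruct (He K eps Heps) as [b [M [Hb [Hab [Hbe Hz]]]]].
    exists b, M. repeat split; auto. apply steinitz_approx_upd_S; auto. simpl. now rewrite Hbe.
  - (* Finitely many failures at a common level and precision force the exponent at [S j]
       above any prescribed [K]. *)
    exists None.
    assert (Hfail : forall e, exists K eps, 0 < eps /\ ~ Q K eps e).
    { intros e. apply NNPP. intros Hcontra. apply Hnone. exists e. intros K eps Heps.
      apply NNPP. intros HQ. apply Hcontra. now exists K, eps. }
    assert (Hmono : forall K K' eps eps' e, (K <= K')%nat -> eps' <= eps ->
      Q K' eps' e -> Q K eps e).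
    { intros K K' eps eps' e HK Heps [b [M [Hb [Hab [Hbe Hz]]]]].
      exists b, M. repeat split; auto; [|lra]. now apply steinitz_approx_mono with K'. }
    intros K eps Heps.
    destruct (uniform_failure_lt Q Hmono Hfail K) as [K' [eps' [Heps' HK']]].
    destruct (Ha (Nat.max K K') (Rmin eps eps')) as [b [M [Hb [Hab Hz]]]];
      [now apply Rmin_pos|].
    pose proof (Rmin_l eps eps'). pose proof (Rmin_r eps eps').
    exists b, M. repeat split; auto; [|lra].
    apply steinitz_approx_upd_S; [apply steinitz_approx_mono with (Nat.max K K'); auto; lia|].
    simpl. destruct (le_lt_dec K (b (S j))) as [|Hlt]; auto. exfalso.
    apply (HK' _ Hlt). exists b, M. repeat split; auto; [|lra].
    apply steinitz_approx_mono with (Nat.max K K'); auto. lia.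
Qed.

Lemma approximable_limit c z a : Re c < -1 -> (forall j, approximable c z j a) ->
  sigma_steinitz_is c a z.
Proof.
  intros hc Ha. apply lim_seq_C_spec. intros eps He.
  destruct (sigma_partial_uniform c (eps / 2) hc) as [j [K Hunif]]; [lra|].
  destruct (Ha j K (eps / 2)) as [b [M [Hb [Hab Hz]]]]; [lra|].
  exists (Nat.max j M). intros N HN.
  rewrite <- (sigma_partial_stable c M N b) in Hz by (auto; lia).
  specialize (Hunif a _ N ltac:(lia) Hab).
  replace (sigma_partial c a N - z)%C with
    ((sigma_partial c a N - sigma_partial c (fun p => Some (b p)) N)
     + (sigma_partial c (fun p => Some (b p)) N - z))%C by ring.
  eapply Rle_lt_trans; [apply Cmod_triangle|]. lra.
Qed.

Theorem mainTheorem4 (c : C) (hc : Re c < -1) :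
  forall z : C, in_closure (sigma_N_set c) z <-> sigma_S_set c z.
Proof.
  intros z. split.
  - intros Hz.
    destruct (prefix_choice (fun a j => approximable c z j a) (fun _ => None)) as [a Ha].
    + intros a a' j Haa'. now apply approximable_ext.
    + now apply approximable_0.
    + intros a j. apply approximable_S.
    + exists a. now apply approximable_limit.
  - now apply sigma_S_in_closure.
Qed.
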